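(* Let $\langle N,P,c,b,\mathcal{A}\rangle$ be any PB instance and let $S$ be the output of the algorithm Ordered-Relax on it. Then $S$ is feasible ($c(S)\le b$) and $$ALG\ \ge\ OPT-\frac{|A_j\setminus S|}{|S\setminus A_j|}\,(b-OPT),$$ where $j\in\arg\min_{i\in N}c(A_i\cap S)$, $ALG=c(A_j\cap S)$, and $OPT=\max_{T\subseteq P,\,c(T)\le b}\min_{i\in N}c(T\cap A_i)$ is the minimum utility in an optimal MPB solution.
   Context: A PB instance is $\langle N,P,c,b,\mathcal{A}\rangle$ with voters $N=\{1,\dots,n\}$, projects $P=\{p_1,\dots,p_m\}$, costs $c:P\to\mathbb{N}$, budget $b\in\mathbb{N}$, and approval sets $A_i\subseteq P$. $c(S)=\sum_{p\in S}c(p)$; $S$ is feasible if $c(S)\le b$. Algorithm Ordered-Relax: compute an optimal solution $(q^*,x^* )$ of the linear program: maximize $q$ subject to $q\le\sum_{p\in A_i}c(p)x_p$ for all $i\in N$, $\sum_{p\in P}c(p)x_p\le b$, $0\le x_p\le 1$ for all $p\in P$, $q\ge 0$. Then order the projects in non-increasing order of $c(p)x^*_p$ (ties broken arbitrarily), start with $S=\emptyset$, and add projects to $S$ in this order, stopping as soon as the next project in the order does not fit within the remaining budget (i.e., would make $c(S)$ exceed $b$); output $S$. *)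

From HB Require Import structures.
From mathcomp Require Import all_boot all_order all_algebra.
Set Implicit Arguments. Unset Strict Implicit. Unset Printing Implicit Defensive.
Import Order.TTheory GRing.Theory Num.Theory.

Section PB.
Variables (N P : finType) (c : P -> nat) (b : nat) (A : N -> {set P}).

Definition cost (S : {set P}) : nat := \sum_(p in S) c p.
Definition feasible (S : {set P}) : bool := cost S <= b.
Definition util (i : N) (S : {set P}) : nat := cost (A i :&: S).
(* min_{i in N} c(T ∩ A_i); (c(T) is a harmless neutral element, an upper bound
   on every util) *)
Definition minutil (T : {set P}) : nat := \big[minn/cost T]_(i : N) util i T.
Definition OPT : nat := \max_(T : {set P} | feasible T) minutil T.

Local Open Scope ring_scope.
Definition lp_feasible (R : realFieldType) (q : R) (x : P -> R) : Prop :=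
  [/\ 0 <= q,
      (forall i : N, q <= \sum_(p in A i) (c p)%:R * x p),
      \sum_(p : P) (c p)%:R * x p <= b%:R
    & (forall p, 0 <= x p <= 1)].
Definition lp_optimal (R : realFieldType) (q : R) (x : P -> R) : Prop :=
  lp_feasible q x /\ (forall q' x', lp_feasible q' x' -> q' <= q).

Definition relax_order (R : realFieldType) (x : P -> R) (ord : seq P) : Prop :=
  perm_eq ord (enum P) /\
  sorted (fun p p' => (c p')%:R * x p' <= (c p)%:R * x p) ord.
Local Close Scope ring_scope.

Fixpoint greedy_prefix (rem : nat) (s : seq P) : seq P :=
  match s with
  | [::] => [::]
  | p :: s' => if c p <= rem then p :: greedy_prefix (rem - c p) s' else [::]
  end.
Definition ordered_relax_output (ord : seq P) : {set P} :=
  [set p in greedy_prefix b ord].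
End PB.

(** The LP optimum [q] dominates [OPT], since the indicator vector of any
    feasible bundle is LP-feasible.  Let [v p = c(p) x_p] and [B = A_j].
    Since [B] receives LP utility at least [q], the projects outside [B] carry
    LP weight at most [b - q]; in particular [sum_(S \ B) v <= b - q].  The
    greedy output [S] is an initial segment of the order by [v], so every
    project of [B \ S] weighs at most the average over [S \ B], hence
    [sum_(B \ S) v <= |B \ S| / |S \ B| * (b - q)].  The rest of the LP utility
    of [B] lies in [B :&: S] and is at most [c(B :&: S)] because [x <= 1].
    Thus [q - r (b - q) <= ALG] with [r = |B \ S| / |S \ B|], and the left-hand
    side is increasing in [q >= OPT]. *)

From HB Require Import structures.
From mathcomp Require Import all_boot all_order all_algebra.
From mathcomp Require Import zify lra.
Set Implicit Arguments.
Unset Strict Implicit.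
Unset Printing Implicit Defensive.

Import Order.TTheory GRing.Theory Num.Theory.
Local Open Scope ring_scope.

Section GreedyPrefix.
Variables (P : finType) (c : P -> nat).

Lemma greedy_prefix_sub rem (s : seq P) : {subset greedy_prefix c rem s <= s}.
Proof.
elim: s rem => [|a s IH] rem //=; case: ifP => _ // p.
by rewrite !inE => /orP[-> // | /IH ->]; rewrite orbT.
Qed.

Lemma greedy_prefix_uniq rem (s : seq P) : uniq s -> uniq (greedy_prefix c rem s).
Proof.
elim: s rem => [|a s IH] rem //= /andP[a_notin_s s_uniq].
case: ifP => _ //=; rewrite IH // andbT.
by apply: contra a_notin_s => /greedy_prefix_sub.
Qed.

Lemma greedy_prefix_cost rem (s : seq P) :
  (\sum_(p <- greedy_prefix c rem s) c p <= rem)%N.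
Proof.
elim: s rem => [|a s IH] rem /=; first by rewrite big_nil.
case: ifP => fits; last by rewrite big_nil.
by rewrite big_cons; have := IH (rem - c a)%N; lia.
Qed.

Lemma greedy_prefix_sorted (e : rel P) rem (s : seq P) :
  transitive e -> sorted e s ->
  forall p p', p \in greedy_prefix c rem s -> p' \in s ->
  p' \notin greedy_prefix c rem s -> e p p'.
Proof.
move=> e_tr; elim: s rem => [|a s IH] rem //= s_sorted p p'.
case: ifP => _ //; rewrite !inE negb_or => /orP[/eqP-> | p_in] p'_in.
  by case/andP=> p'_neq_a _; move: p'_in; rewrite (negbTE p'_neq_a) /=;
     apply/allP/(order_path_min e_tr).
case/andP=> p'_neq_a p'_out; move: p'_in; rewrite (negbTE p'_neq_a) /= => p'_in.
exact: (IH (rem - c a)%N (path_sorted s_sorted)).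
Qed.

Lemma cost_ordered_relax_output b (ord : seq P) :
  uniq ord -> (cost c (ordered_relax_output c b ord) <= b)%N.
Proof.
move=> ord_uniq; rewrite /cost /ordered_relax_output.
under eq_bigl do rewrite inE.
by rewrite -big_uniq ?greedy_prefix_uniq //; apply: greedy_prefix_cost.
Qed.

Lemma ordered_relax_output_dominates (R : realFieldType) (x : P -> R) b
    (ord : seq P) :
  relax_order c x ord ->
  let S := ordered_relax_output c b ord in
  forall p p', p \in S -> p' \notin S -> (c p')%:R * x p' <= (c p)%:R * x p.
Proof.
move=> [ord_perm ord_sorted] S p p'; rewrite !inE => p_in p'_out.
have weight_tr : transitive (fun p p' : P => (c p')%:R * x p' <= (c p)%:R * x p).
  by move=> y z w /= zy wz; apply: le_trans wz zy.
have p'_in : p' \in ord by rewrite (perm_mem ord_perm) mem_enum.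
exact: (greedy_prefix_sorted weight_tr ord_sorted p_in p'_in p'_out).
Qed.

End GreedyPrefix.

Lemma ler_sum_subset (R : numDomainType) (I : finType) (B C : {pred I})
    (F : I -> R) :
  {subset B <= C} -> (forall i, 0 <= F i) ->
  \sum_(i in B) F i <= \sum_(i in C) F i.
Proof.
move=> BC F_ge0; rewrite big_mkcond [leRHS]big_mkcond; apply: ler_sum => i _.
by case: ifP => [/BC -> // | _]; case: ifP.
Qed.

Lemma sum_setD_exchange (R : realFieldType) (P : finType) (v : P -> R)
    (S B : {set P}) :
  (forall p p', p \in S -> p' \notin S -> v p' <= v p) ->
  #|S :\: B|%:R * \sum_(p in B :\: S) v p
    <= #|B :\: S|%:R * \sum_(p in S :\: B) v p.
Proof.
move=> S_dominates; rewrite mulr_sumr [leRHS]mulr_natl -[leRHS]sumr_const.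
apply: ler_sum => p; rewrite inE => /andP[p_out _].
rewrite mulr_natl -sumr_const; apply: ler_sum => p'.
by rewrite inE => /andP[_ p'_in]; apply: S_dominates.
Qed.

Lemma relaxation_gap_le (R : realFieldType) (k m u q opt b : R) :
  0 < k -> 0 <= m -> opt <= q -> k * q <= k * u + m * (b - q) ->
  opt - m / k * (b - opt) <= u.
Proof.
move=> k_gt0 m_ge0 opt_le_q exchange.
set ratio := m / k.
have m_eq : m = k * ratio by rewrite /ratio mulrCA divff ?mulr1 // gt_eqF.
have ratio_ge0 : 0 <= ratio := divr_ge0 m_ge0 (ltW k_gt0).
have q_gap : q - ratio * (b - q) <= u.
  rewrite -(ler_pM2l k_gt0); move: exchange; rewrite m_eq; nra.
by apply: le_trans q_gap; nra.
Qed.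

Section LPRelaxation.
Variables (R : realFieldType) (N P : finType) (c : P -> nat) (b : nat).
Variable A : N -> {set P}.

Lemma minutil_le_util T i : (minutil c A T <= util c A i T)%N.
Proof.
rewrite /minutil; have : i \in index_enum N := mem_index_enum i.
elim: (index_enum N) => [|j r IH] //; rewrite big_cons inE.
case/orP=> [/eqP <- | /IH]; first exact: geq_minl.
by rewrite geq_min => ->; rewrite orbT.
Qed.

Lemma sum_cost_indicator (B T : {set P}) :
  \sum_(p in B) (c p)%:R * (p \in T)%:R = (cost c (B :&: T))%:R :> R.
Proof.
rewrite /cost natr_sum big_mkcond [RHS]big_mkcond /=.
apply: eq_bigr => p _; rewrite inE.
by case: (p \in B); case: (p \in T); rewrite ?mulr1 ?mulr0.
Qed.

Lemma lp_feasible_indicator T : feasible c b T ->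
  lp_feasible c b A ((minutil c A T)%:R : R) (fun p => (p \in T)%:R).
Proof.
move=> T_feasible; split=> [||| p].
- exact: ler0n.
- by move=> i; rewrite sum_cost_indicator ler_nat minutil_le_util.
- rewrite (eq_bigl [in [set: P]]) => [|p]; last by rewrite inE.
  by rewrite sum_cost_indicator setTI ler_nat.
- by case: (p \in T); rewrite ?lexx ?ler01.
Qed.

Lemma OPT_le_lp_value (q : R) (x : P -> R) :
  lp_optimal c b A q x -> (OPT c b A)%:R <= q.
Proof.
move=> [[q_ge0 _ _ _] q_max]; rewrite /OPT; elim/big_ind: _ => //.
  by move=> m n; rewrite /maxn; case: ifP.
by move=> T /lp_feasible_indicator /q_max.
Qed.

Variables (q : R) (x : P -> R).
Hypothesis qx_feasible : lp_feasible c b A q x.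

Lemma lp_weight_ge0 p : 0 <= (c p)%:R * x p.
Proof. by have [_ _ _ /(_ p)/andP[x_ge0 _]] := qx_feasible; rewrite mulr_ge0. Qed.

Lemma lp_weight_setD_le j (S : {set P}) :
  \sum_(p in S :\: A j) (c p)%:R * x p <= b%:R - q.
Proof.
have [_ /(_ j) q_le_Aj budget _] := qx_feasible.
have S_out : \sum_(p in S :\: A j) (c p)%:R * x p
             <= \sum_(p in ~: A j) (c p)%:R * x p.
  by apply: ler_sum_subset lp_weight_ge0 => p; rewrite !inE => /andP[].
rewrite lerBrDl; apply: le_trans (lerD q_le_Aj S_out) (le_trans _ budget).
rewrite [leRHS](bigID [in A j]) /= lerD2l.
by apply: ler_sum_subset lp_weight_ge0 => p; rewrite inE.
Qed.

Lemma lp_weight_setI_le_util j (S : {set P}) :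
  \sum_(p in A j :&: S) (c p)%:R * x p <= (util c A j S)%:R.
Proof.
have [_ _ _ x01] := qx_feasible.
rewrite /util /cost natr_sum; apply: ler_sum => p _.
by rewrite ler_piMr //; case/andP: (x01 p).
Qed.

Lemma lp_exchange_bound j (S : {set P}) :
  (forall p p', p \in S -> p' \notin S -> (c p')%:R * x p' <= (c p)%:R * x p) ->
  #|S :\: A j|%:R * q
    <= #|S :\: A j|%:R * (util c A j S)%:R + #|A j :\: S|%:R * (b%:R - q).
Proof.
move=> S_dominates; have [_ /(_ j) q_le_Aj _ _] := qx_feasible.
rewrite (big_setID S) in q_le_Aj.
apply: le_trans (ler_wpM2l (ler0n _ _) q_le_Aj) _; rewrite mulrDr lerD //.
  exact/ler_wpM2l/lp_weight_setI_le_util.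
apply: le_trans (sum_setD_exchange (A j) S_dominates) _.
exact/ler_wpM2l/lp_weight_setD_le.
Qed.

End LPRelaxation.

Theorem lemma1 (R : realFieldType) (N P : finType) (c : P -> nat) (b : nat)
    (A : N -> {set P}) (q : R) (x : P -> R) (ord : seq P) :
  lp_optimal c b A q x ->
  relax_order c x ord ->
  let S := ordered_relax_output c b ord in
  (cost c S <= b)%N /\
  (forall j : N, (forall i : N, (util c A j S <= util c A i S)%N) ->
     (0 < #|S :\: A j|)%N ->
     (OPT c b A)%:R
       - (#|A j :\: S|%:R / #|S :\: A j|%:R) * (b%:R - (OPT c b A)%:R)
     <= (util c A j S)%:R :> R).
Proof.
move=> qx_opt x_ord S; have [qx_feasible _] := qx_opt.
split.
  by apply: cost_ordered_relax_output; rewrite (perm_uniq x_ord.1) enum_uniq.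
move=> j _ S_out_gt0; apply: relaxation_gap_le.
- by rewrite ltr0n.
- exact: ler0n.
- exact: OPT_le_lp_value qx_opt.
- exact/(lp_exchange_bound qx_feasible)/ordered_relax_output_dominates.
Qed.
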